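(* Let $\Gamma$ be a lattice with periodic boundary conditions as below, let $\mathcal{X}$ be an artificial boundary, let $S_E\subseteq C_1(\Gamma)$ be the set of edges carrying nonzero syndrome of some bit-flip error, i.e. $S_E=\partial(F_0)$ for some set of faces $F_0$, and let $\mathcal{E}$ be the set of faces returned by Procedure P5 on input $(S_E,\mathcal{X})$. Then: (a) (Existence) there exists a set of faces $\hat{\mathcal{E}}\subseteq\mathcal{E}\cup\mathcal{X}$ with $\partial(\hat{\mathcal{E}})=S_E$; (b) (Uniqueness) if $\hat{\mathcal{E}}_1,\hat{\mathcal{E}}_2\subseteq\mathcal{E}\cup\mathcal{X}$ satisfy $\partial(\hat{\mathcal{E}}_1)=\partial(\hat{\mathcal{E}}_2)=S_E$, then $\hat{\mathcal{E}}_1\triangle\hat{\mathcal{E}}_2\subseteq\mathcal{X}$, i.e. $\hat{\mathcal{E}}_1\setminus\mathcal{X}=\hat{\mathcal{E}}_2\setminus\mathcal{X}$.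
   Context: $\Gamma$ is a finite, connected three-dimensional cell complex without boundary (periodic boundary conditions), with edges $C_1(\Gamma)$, faces $C_2(\Gamma)$, volumes $C_3(\Gamma)$; every face lies in the boundary of exactly two distinct volumes and the dual complex is connected. $\partial(f)$ is the set of boundary edges of face $f$, $\partial(\nu)$ the set of boundary faces of volume $\nu$, $\iota(e)$ the set of faces containing edge $e$; for a set of faces $F$, $\partial(F)$ is the symmetric difference of the $\partial(f)$, $f\in F$, and $\triangle$ denotes symmetric difference. The 3D toric code on $\Gamma$ has one qubit per face, stabilizer group generated by $B_e=\prod_{f\in\iota(e)}Z_f$ and $A_\nu=\prod_{f\in\partial(\nu)}X_f$, and encodes $k$ logical qubits; a logical operator is a Pauli operator commuting with all stabilizers but not in the stabilizer group (up to phase); $X_S=\prod_{f\in S}X_f$. Fix $X$-type logical operators $\bar X_1,\dots,\bar X_k$, one per logical qubit. An artificial boundary is a set $\mathcal{X}=\bigcup_{i=1}^k\mathrm{supp}(\bar X_i^r)$, where each $\bar X_i^r$ is an $X$-type operator with $\bar X_i^r\bar X_i$ an $X$-type stabilizer, such that $\mathcal{X}$ contains no nonempty set $S$ with $X_S$ a stabilizer. A face path is a sequence of faces $\rho=(f_1,\dots,f_m)$ with pairwise distinct volumes $\Lambda(\rho)=(\nu_1,\dots,\nu_{m-1})$, $f_i,f_{i+1}\in\partial(\nu_i)$. A set of faces $K$ is a cut set of $\Gamma$ if there exist volumes $\nu,\nu'$ such that every face path $\rho$ with $f_1\in\partial(\nu)$, $f_m\in\partial(\nu')$, $\nu,\nu'\notin\Lambda(\rho)$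 meets $K$. Procedure P5 (input $S_E,\mathcal{X}$): set $\mathcal{E}=\emptyset$, $B=S_E$, all faces unexplored. Repeat rounds until all faces of $C_2(\Gamma)\setminus\mathcal{X}$ are explored: set $B'=\emptyset$; for each unexplored face $f\in C_2(\Gamma)\setminus\mathcal{X}$ with $\partial(f)\cap B\ne\emptyset$, mark $f$ explored and, if $\mathcal{X}\cup\mathcal{E}\cup\{f\}$ is not a cut set of $\Gamma$, set $\mathcal{E}\leftarrow\mathcal{E}\cup\{f\}$ and $B'\leftarrow B'\cup\partial(f)$; at the end of the round set $B\leftarrow B'\setminus B$. It is assumed that the procedure terminates with every face of $C_2(\Gamma)\setminus\mathcal{X}$ explored; it returns $\mathcal{E}$ (so $\mathcal{E}\cap\mathcal{X}=\emptyset$). *)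

From mathcomp Require Import all_boot.
Set Implicit Arguments.
Unset Strict Implicit.
Unset Printing Implicit Defensive.

Record complex := Complex {
  Vert : finType; Edge : finType; Face : finType; Vol : finType;
  bdE : Edge -> {set Vert};
  bdF : Face -> {set Edge};
  bdV : Vol -> {set Face} }.

Definition bigsymdiff (T U : finType) (I : {set T}) (A : T -> {set U}) : {set U} :=
  [set x | odd #|[set i in I | x \in A i]|].

Definition symdiff (U : finType) (A B : {set U}) : {set U} := (A :\: B) :|: (B :\: A).

Section Complex.
Variable G : complex.

Definition bdFs (F : {set Face G}) : {set Edge G} := bigsymdiff F (@bdF G).

Definition iota (e : Edge G) : {set Face G} := [set f | e \in bdF f].

Definition primal_adj : rel (Vert G) :=
  fun x y => [exists e, (x \in bdE e) && (y \in bdE e)].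
Definition dual_adj : rel (Vol G) :=
  fun u w => [exists f, (f \in bdV u) && (f \in bdV w)].

Definition valid_complex : Prop :=
  [/\ forall f : Face G, bigsymdiff (bdF f) (@bdE G) = set0,
      forall v : Vol G, bigsymdiff (bdV v) (@bdF G) = set0,
      forall f : Face G, #|[set v : Vol G | f \in bdV v]| = 2,
      forall x y : Vert G, connect primal_adj x y
    & forall u w : Vol G, connect dual_adj u w].

(* X-type Pauli operators are represented by their support (a set of faces).
   X_S is in the stabilizer group iff it is a product of the A_nu's, i.e.
   S is the symmetric difference of the boundaries of some set of volumes. *)
Definition is_Xstab (S : {set Face G}) : Prop :=
  exists V : {set Vol G}, S = bigsymdiff V (@bdV G).

(* X_S commutes with every stabilizer: it always commutes with the A_nu, and
   commutes with B_e iff |S cap iota(e)| is even. *)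
Definition commutes_all (S : {set Face G}) : Prop :=
  forall e : Edge G, ~~ odd #|S :&: iota e|.

Definition is_logicalX (S : {set Face G}) : Prop :=
  commutes_all S /\ ~ is_Xstab S.

(* Xbar_1..Xbar_k : one X-type logical operator per logical qubit, i.e. a basis
   of the X-type logical operators modulo X-type stabilizers (k = number of
   encoded qubits). *)
Definition logical_X_basis (k : nat) (Xbar : 'I_k -> {set Face G}) : Prop :=
  [/\ forall i, is_logicalX (Xbar i),
      forall I : {set 'I_k}, is_Xstab (bigsymdiff I Xbar) -> I = set0
    & forall S, commutes_all S ->
        exists I : {set 'I_k}, is_Xstab (symdiff S (bigsymdiff I Xbar))].

Definition artificial_boundary (k : nat) (Xbar : 'I_k -> {set Face G})
    (Xb : {set Face G}) : Prop :=
  exists R : 'I_k -> {set Face G},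
    [/\ forall i, is_Xstab (symdiff (R i) (Xbar i)),
        Xb = \bigcup_(i < k) R i
      & forall S : {set Face G}, S \subset Xb -> S != set0 -> ~ is_Xstab S].

(* Face paths: rho = (f1, f2, ..., fm) with volumes Lambda = (nu1, ..., nu_{m-1});
   encoded as f1 and the list of steps (nu_i, f_{i+1}). *)
Fixpoint fpath (f : Face G) (steps : seq (Vol G * Face G)) : bool :=
  match steps with
  | [::] => true
  | (v, g) :: st => [&& f \in bdV v, g \in bdV v & fpath g st]
  end.

Definition cutset (K : {set Face G}) : Prop :=
  exists nu nu' : Vol G,
    forall (f1 : Face G) (steps : seq (Vol G * Face G)),
      fpath f1 steps -> uniq (map fst steps) ->
      f1 \in bdV nu -> last f1 (map snd steps) \in bdV nu' ->
      nu \notin map fst steps -> nu' \notin map fst steps ->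
      (f1 \in K) || has (mem K) (map snd steps).

Record p5state := P5State {
  st_expl : {set Face G}; st_E : {set Face G}; st_B : {set Edge G} }.

(* Processing, in order, the faces of a round: proc_rel Xb s E B' E2 B2 means
   that starting with current E and B', processing the sequence s yields E2, B2. *)
Inductive proc_rel (Xb : {set Face G}) :
  seq (Face G) -> {set Face G} -> {set Edge G} -> {set Face G} -> {set Edge G} -> Prop :=
| proc_nil E B' : proc_rel Xb [::] E B' E B'
| proc_add f s E B' E2 B2 :
    ~ cutset (Xb :|: E :|: [set f]) ->
    proc_rel Xb s (E :|: [set f]) (B' :|: bdF f) E2 B2 ->
    proc_rel Xb (f :: s) E B' E2 B2
| proc_skip f s E B' E2 B2 :
    cutset (Xb :|: E :|: [set f]) ->
    proc_rel Xb s E B' E2 B2 ->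
    proc_rel Xb (f :: s) E B' E2 B2.

Definition p5_candidate (Xb : {set Face G}) (st : p5state) (f : Face G) : bool :=
  [&& f \notin Xb, f \notin st_expl st & bdF f :&: st_B st != set0].

(* One round, processing the candidate faces in an arbitrary order s. *)
Definition p5_round (Xb : {set Face G}) (st st' : p5state) : Prop :=
  exists s : seq (Face G),
    [/\ uniq s, forall f, (f \in s) = p5_candidate Xb st f &
      exists E2 B2, proc_rel Xb s (st_E st) set0 E2 B2 /\
        st' = P5State (st_expl st :|: [set f in s]) E2 (B2 :\: st_B st)].

Definition p5_finished (Xb : {set Face G}) (st : p5state) : bool :=
  ~: Xb \subset st_expl st.

Inductive p5_run (Xb : {set Face G}) : p5state -> {set Face G} -> Prop :=
| p5_done st : p5_finished Xb st -> p5_run Xb st (st_E st)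
| p5_step st st' E : ~~ p5_finished Xb st -> p5_round Xb st st' ->
    p5_run Xb st' E -> p5_run Xb st E.

(* P5 on input (S_E, Xb) terminates (with all faces outside Xb explored)
   and returns E. *)
Definition P5_returns (SE : {set Edge G}) (Xb : {set Face G}) (E : {set Face G}) : Prop :=
  p5_run Xb (P5State set0 set0 SE) E.

End Complex.

From Pilot Require Import Defs.
From mathcomp Require Import all_boot.
Set Implicit Arguments. Unset Strict Implicit. Unset Printing Implicit Defensive.

(* Since every face bounds exactly two volumes and the dual complex is
   connected, a set of faces is a cut set exactly when it contains the support
   bdVs V of a nonempty X-stabilizer: if K separates nu from nu', take for V
   the volumes reachable from nu without crossing K.  Hence P5 keeps E :|: X
   free of nonempty stabilizer supports, and every face t outside E :|: X was
   rejected because some stabilizer support through t lies in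
   E :|: X :|: [set t].
   Existence: adding these stabilizers to F0 does not change its boundary and
   removes, one at a time, its faces outside E :|: X.
   Uniqueness: E1 (+) E2 has no boundary, so by the logical basis it is a
   stabilizer plus a sum of the Xbar_i, i.e. a stabilizer plus a subset Q of
   the artificial boundary; that stabilizer lies in E :|: X, hence vanishes,
   and E1 (+) E2 = Q. *)

Section SymmetricDifference.
Variable U : finType.
Implicit Types A B C : {set U}.

Lemma in_symdiff A B x : (x \in symdiff A B) = (x \in A) (+) (x \in B).
Proof. by rewrite /symdiff !inE; case: (x \in A); case: (x \in B). Qed.

Lemma symdiffxx A : symdiff A A = set0.
Proof. by apply/setP => x; rewrite in_symdiff addbb inE. Qed.

Lemma symdiffx0 A : symdiff A set0 = A.
Proof. by apply/setP => x; rewrite in_symdiff inE addbF. Qed.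

Lemma symdiff_eq0 A B : symdiff A B = set0 -> A = B.
Proof.
move/setP=> AB0; apply/setP => x; move: (AB0 x); rewrite in_symdiff inE.
by case: (x \in A); case: (x \in B).
Qed.

Lemma symdiff_cancelr A B C : symdiff (symdiff A C) (symdiff B C) = symdiff A B.
Proof. by apply/setP => x; rewrite !in_symdiff addbACA addbb addbF. Qed.

Lemma symdiff_subset A B C : A \subset C -> B \subset C -> symdiff A B \subset C.
Proof.
move=> sAC sBC; rewrite /symdiff subUset.
by rewrite (subset_trans (subsetDl _ _) sAC) (subset_trans (subsetDl _ _) sBC).
Qed.

End SymmetricDifference.

Lemma odd_sum_odd (I : finType) (P : pred I) (F : I -> nat) :
  odd (\sum_(i | P i) F i) = odd (\sum_(i | P i) odd (F i)).
Proof.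
apply: (big_ind2 (fun a b => odd a = odd b)) => // [a b c d ac bd|i _].
  by rewrite !oddD ac bd.
by rewrite oddb.
Qed.

Lemma card_setI_sum (T : finType) (A B : {set T}) :
  #|A :&: B| = \sum_(u in B) (u \in A).
Proof.
rewrite -sum1_card (eq_bigl (fun u => (u \in B) && (u \in A))) => [|u]; last first.
  by rewrite inE andbC.
by rewrite big_mkcondr; apply: eq_bigr => u _; case: (u \in A).
Qed.

Lemma odd_symdiffI (U : finType) (X Y B : {set U}) :
  odd #|symdiff X Y :&: B| = odd #|X :&: B| (+) odd #|Y :&: B|.
Proof.
rewrite !card_setI_sum -oddD -big_split /= odd_sum_odd [RHS]odd_sum_odd.
by congr odd; apply: eq_bigr => u _; rewrite in_symdiff oddD !oddb.
Qed.

Section BigSymdiff.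
Variables T U : finType.
Implicit Types (I J : {set T}) (A B : T -> {set U}).

Lemma mem_bigsymdiff I A x :
  (x \in bigsymdiff I A) = odd (\sum_(i in I) (x \in A i)).
Proof.
rewrite inE setIdE setIC card_setI_sum.
by congr odd; apply: eq_bigr => i _; rewrite inE.
Qed.

Lemma odd_bigsymdiffI I A (C : {set U}) :
  odd #|bigsymdiff I A :&: C| = odd (\sum_(i in I) #|A i :&: C|).
Proof.
rewrite card_setI_sum.
under eq_bigr => u _ do rewrite mem_bigsymdiff.
rewrite -odd_sum_odd exchange_big /=.
by congr odd; apply: eq_bigr => i _; rewrite card_setI_sum.
Qed.

Lemma eq_bigsymdiff I A B :
  (forall i, i \in I -> A i = B i) -> bigsymdiff I A = bigsymdiff I B.
Proof.
move=> eqAB; apply/setP => x; rewrite !mem_bigsymdiff.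
by congr odd; apply: eq_bigr => i /eqAB ->.
Qed.

Lemma bigsymdiff0 I : bigsymdiff I (fun=> set0 : {set U}) = set0.
Proof. by apply/setP => x; rewrite mem_bigsymdiff inE big1. Qed.

Lemma bigsymdiff_symdiffl I J A :
  bigsymdiff (symdiff I J) A = symdiff (bigsymdiff I A) (bigsymdiff J A).
Proof. by apply/setP => x; rewrite in_symdiff !inE !setIdE odd_symdiffI. Qed.

Lemma bigsymdiff_symdiffr I A B :
  bigsymdiff I (fun i => symdiff (A i) (B i)) =
  symdiff (bigsymdiff I A) (bigsymdiff I B).
Proof.
apply/setP => x; rewrite in_symdiff !mem_bigsymdiff -oddD -big_split /=.
rewrite odd_sum_odd [RHS]odd_sum_odd.
by congr odd; apply: eq_bigr => i _; rewrite in_symdiff oddD !oddb.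
Qed.

Lemma bigsymdiff_sub_bigcup I A : bigsymdiff I A \subset \bigcup_i A i.
Proof.
apply/subsetP => x; rewrite inE => odd_x; apply/bigcupP.
have /set0Pn [i] : [set i in I | x \in A i] != set0.
  by apply: contraTneq odd_x => ->; rewrite cards0.
by rewrite inE => /andP [_ xAi]; exists i.
Qed.

End BigSymdiff.

Lemma bigsymdiff_bigsymdiff (S T U : finType) (I : {set S}) (A : S -> {set T})
    (B : T -> {set U}) :
  bigsymdiff (bigsymdiff I A) B = bigsymdiff I (fun i => bigsymdiff (A i) B).
Proof.
apply/setP => x; rewrite [RHS]mem_bigsymdiff inE setIdE odd_bigsymdiffI odd_sum_odd.
by congr odd; apply: eq_bigr => i _; rewrite inE setIdE.
Qed.

Section Complex.
Variable G : complex.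
Implicit Types (f : Face G) (a b u v w : Vol G).
Implicit Types (S K M F E Xb : {set Face G}) (V : {set Vol G}).

Definition bdVs V : {set Face G} := bigsymdiff V (@bdV G).

Definition stab_free K : Prop := forall S, S \subset K -> S != set0 -> ~ is_Xstab S.

Lemma bdFs_symdiff S S' : bdFs (symdiff S S') = symdiff (bdFs S) (bdFs S').
Proof. exact: bigsymdiff_symdiffl. Qed.

Lemma commutes_all_bdFs0 S : bdFs S = set0 -> commutes_all S.
Proof. by move=> bdS0 e; have := in_set0 e; rewrite -bdS0 inE setIdE => ->. Qed.

Lemma is_Xstab_symdiff S S' : is_Xstab S -> is_Xstab S' -> is_Xstab (symdiff S S').
Proof. by move=> [V ->] [W ->]; exists (symdiff V W); rewrite bigsymdiff_symdiffl. Qed.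

Lemma is_Xstab_bigsymdiff (T : finType) (I : {set T}) (A : T -> {set Face G}) :
  (forall i, is_Xstab (A i)) -> is_Xstab (bigsymdiff I A).
Proof.
move=> /fin_all_exists [V AV]; exists (bigsymdiff I V).
by rewrite bigsymdiff_bigsymdiff; apply: eq_bigsymdiff => i _; rewrite AV.
Qed.

Lemma stab_free_eq M S S' : stab_free M -> S \subset M -> S' \subset M ->
  is_Xstab (symdiff S S') -> S = S'.
Proof.
move=> freeM sSM sS'M stabSS'; apply: symdiff_eq0; apply/eqP/negPn/negP => SS'0.
exact: freeM (symdiff_subset sSM sS'M) SS'0 stabSS'.
Qed.

Lemma bdVs_set1 v : bdVs [set v] = bdV v.
Proof. by apply/setP => f; rewrite inE setIdE setIC card_setI_sum big_set1 inE oddb. Qed.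

Hypothesis bdbdV0 : forall v : Vol G, bigsymdiff (bdV v) (@bdF G) = set0.

Lemma bdFs_bdVs V : bdFs (bdVs V) = set0.
Proof.
by rewrite /bdFs bigsymdiff_bigsymdiff (eq_bigsymdiff (B := fun=> set0)) ?bigsymdiff0.
Qed.

Hypothesis two_vols : forall f : Face G, #|[set v : Vol G | f \in bdV v]| = 2.

Lemma face_vols f : exists a b, [/\ f \in bdV a, f \in bdV b & a != b].
Proof.
have /cards2P [a [b [ab vols_f]]] : #|[set v : Vol G | f \in bdV v]| == 2.
  by rewrite two_vols.
exists a, b; split => //.
  by move/setP: vols_f => /(_ a); rewrite !inE eqxx => ->.
by move/setP: vols_f => /(_ b); rewrite !inE eqxx orbT => ->.
Qed.

Lemma vols_of_face f a b : f \in bdV a -> f \in bdV b -> a != b ->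
  [set v | f \in bdV v] = [set a; b].
Proof.
move=> fa fb ab; apply/eqP; rewrite eq_sym eqEcard two_vols cards2 ab andbT.
by apply/subsetP => x; rewrite !inE => /orP [] /eqP ->.
Qed.

Lemma in_bdVs V f a b : f \in bdV a -> f \in bdV b -> a != b ->
  (f \in bdVs V) = (a \in V) (+) (b \in V).
Proof.
move=> fa fb ab.
rewrite inE setIdE (vols_of_face fa fb ab) card_setI_sum big_setU1 ?inE // big_set1.
by rewrite oddD !oddb.
Qed.

Hypothesis dual_connected : forall u w : Vol G, connect (@dual_adj G) u w.

Lemma bdVs_neq0 V u w : u \in V -> w \notin V -> bdVs V != set0.
Proof.
move=> uV wV; apply/negP => /eqP bdV0.
have closedV : closed (@dual_adj G) V.
  move=> x y /existsP [f /andP [fx fy]].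
  have [<-//|xy] := eqVneq x y.
  have := in_bdVs V fx fy xy; rewrite bdV0 in_set0.
  by case: (x \in V); case: (y \in V).
by have := closed_connect closedV (dual_connected u w); rewrite uV (negbTE wV).
Qed.

Lemma cutset_subset K K' : cutset K -> K \subset K' -> cutset K'.
Proof.
move=> [nu [nu' sepK]] sKK'; exists nu, nu' => f1 steps fp us f1nu lastnu' nu1 nu'1.
have /orP [f1K | hitK] := sepK f1 steps fp us f1nu lastnu' nu1 nu'1.
  by rewrite (subsetP sKK' _ f1K).
by apply/orP; right; apply: sub_has hitK => g /(subsetP sKK').
Qed.

Lemma fpath_meets_bdVs V b : b \notin V -> forall steps f1 a,
  a \in V -> f1 \in bdV a -> Defs.fpath f1 steps -> uniq (map fst steps) ->
  a \notin map fst steps -> b \notin map fst steps ->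
  last f1 (map snd steps) \in bdV b -> has (mem (bdVs V)) (f1 :: map snd steps).
Proof.
move=> bV; elim=> [|[v g] steps IH] f1 a aV f1a /=.
  move=> _ _ _ _ f1b; have ab : a != b by apply: contraNneq bV => <-.
  by rewrite (in_bdVs _ f1a f1b ab) aV (negbTE bV).
case/and3P => f1v gv gp /andP [vsteps usteps].
rewrite !in_cons !negb_or => /andP [av asteps] /andP [bv bsteps] lastb.
case: (boolP (v \in V)) => vV; last by rewrite (in_bdVs _ f1a f1v av) aV (negbTE vV).
by apply/orP; right; exact: IH g v vV gv gp usteps vsteps bsteps lastb.
Qed.

Lemma bdVs_cutset V K : bdVs V \subset K -> bdVs V != set0 -> cutset K.
Proof.
move=> sVK /set0Pn [f fV]; apply: cutset_subset sVK.
have [a [b [fa fb ab]]] := face_vols f.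
wlog aV : a b fa fb ab / a \in V => [hwlog|].
  have [aV|aNV] := boolP (a \in V); first exact: (hwlog a b).
  apply: (hwlog b a) => //; first by rewrite eq_sym.
  by move: fV; rewrite (in_bdVs _ fa fb ab) (negbTE aNV).
have bV : b \notin V by move: fV; rewrite (in_bdVs _ fa fb ab) aV.
exists a, b => f1 steps fp us f1a lastb anot bnot.
exact: fpath_meets_bdVs bV _ _ _ aV f1a fp us anot bnot lastb.
Qed.

Definition dual_adj_off K : rel (Vol G) :=
  fun u w => [exists f, [&& f \notin K, f \in bdV u & f \in bdV w]].

Definition dual_reach_off K u : {set Vol G} := [set w | connect (dual_adj_off K) u w].

Lemma dual_path_fpath K x w q : path (dual_adj_off K) x (w :: q) ->
  exists f1 steps,
    [/\ Defs.fpath f1 steps, map fst steps = belast w q, f1 \in bdV x,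
        last f1 (map snd steps) \in bdV (last w q)
      & ~~ has (mem K) (f1 :: map snd steps)].
Proof.
elim: q x w => [|w' q IH] x w /=.
  rewrite andbT => /existsP [f /and3P [fK fx fw]].
  by exists f, [::]; split; rewrite //= orbF.
case/andP => /existsP [f /and3P [fK fx fw]] /IH [f1 [steps [fp msteps f1w lastq nK]]].
by exists f, ((w, f1) :: steps); split; rewrite //= ?fw ?f1w ?fp ?msteps ?(negbTE fK).
Qed.

Lemma bdVs_dual_reach_off K u : bdVs (dual_reach_off K u) \subset K.
Proof.
apply/subsetP => f; apply: contraLR => fK.
have [a [b [fa fb ab]]] := face_vols f.
have adj v w : f \in bdV v -> f \in bdV w -> dual_adj_off K v w.
  by move=> fv fw; apply/existsP; exists f; rewrite fK fv fw.
rewrite (in_bdVs _ fa fb ab) !inE.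
suff -> : connect (dual_adj_off K) u a = connect (dual_adj_off K) u b by rewrite addbb.
by apply/idP/idP => /connect_trans; apply; apply: connect1; apply: adj.
Qed.

(* [cutset K] unfolds to [exists nu nu', separates K nu nu']. *)
Definition separates K nu nu' : Prop :=
  forall f1 steps, Defs.fpath f1 steps -> uniq (map fst steps) ->
    f1 \in bdV nu -> last f1 (map snd steps) \in bdV nu' ->
    nu \notin map fst steps -> nu' \notin map fst steps ->
    (f1 \in K) || has (mem K) (map snd steps).

Lemma separates_notin_dual_reach_off K nu nu' :
  nu != nu' -> separates K nu nu' -> nu' \notin dual_reach_off K nu.
Proof.
move=> nu_nu' sep; rewrite inE; apply/negP => /connectP [p pp lastp].
move: lastp; case: (shortenP pp) => [[|w q] pq uq _] lastq.
  by rewrite lastq eqxx in nu_nu'.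
have [f1 [steps [fp msteps f1nu lastf nK]]] := dual_path_fpath pq.
have {}lastq : nu' = last w q by [].
have nu_notin : nu \notin w :: q by case/andP: uq.
have : uniq (rcons (belast w q) nu') by rewrite lastq -lastI; case/andP: uq.
rewrite rcons_uniq => /andP [nu'_notin ub].
have nu_notin_b : nu \notin belast w q by apply: contra nu_notin => /mem_belast.
rewrite -lastq in lastf; move: (sep f1 steps fp); rewrite msteps.
by move=> /(_ ub f1nu lastf nu_notin_b nu'_notin) hit; rewrite /= hit in nK.
Qed.

(* The face [t] only rules out a complex without faces, in which every set of
   faces is a cut set. *)
Lemma cutset_bdVs (t : Face G) K :
  cutset K -> exists2 V, bdVs V \subset K & bdVs V != set0.
Proof.
case=> nu [nu' sep]; case: (eqVneq nu nu') sep => [<- | nu_nu'] sep.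
  exists [set nu].
    rewrite bdVs_set1; apply/subsetP => f fnu.
    by have := sep f [::] isT isT fnu fnu isT isT; rewrite orbF.
  have [a [b [ta tb ab]]] := face_vols t.
  have [w wnu] : exists w, w != nu.
    by case: (eqVneq a nu) => [ea | ?]; [exists b; rewrite -ea eq_sym | exists a].
  by apply: (bdVs_neq0 (u := nu) (w := w)); rewrite !inE ?eqxx.
exists (dual_reach_off K nu); first exact: bdVs_dual_reach_off.
apply: (bdVs_neq0 (u := nu) (w := nu')); first by rewrite inE connect0.
exact: separates_notin_dual_reach_off.
Qed.

Lemma stab_free_notcut K : ~ cutset K -> stab_free K.
Proof.
move=> ncut S sSK S0 [V defS]; apply: ncut.
by apply: (bdVs_cutset (V := V)); rewrite /bdVs -defS.
Qed.

Lemma cutset_setU1_stab M t : stab_free M -> cutset (M :|: [set t]) ->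
  exists2 V, t \in bdVs V & bdVs V \subset M :|: [set t].
Proof.
move=> freeM /(cutset_bdVs t) [V sVMt V0]; exists V => //.
apply/negPn/negP => tV; apply: (freeM (bdVs V)) V0 _; last by exists V.
apply/subsetP => x xV; move: (subsetP sVMt x xV); rewrite !inE => /orP [//|/eqP xt].
by rewrite -xt xV in tV.
Qed.

Lemma bdFs_sub_of_stab M :
  (forall t, t \notin M -> exists2 V, t \in bdVs V & bdVs V \subset M :|: [set t]) ->
  forall F, exists Eh : {set Face G}, Eh \subset M /\ bdFs Eh = bdFs F.
Proof.
move=> stabM F; have [n] := ubnP #|F :\: M|; elim: n F => // n IH F /ltnSE sizeF.
case: (set_0Vmem (F :\: M)) => [FM0 | [t]].
  by exists F; split=> //; rewrite -setD_eq0 FM0.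
rewrite inE => /andP [tM tF]; have [V tV sV] := stabM t tM.
have [|Eh [sEhM bdEh]] := IH (symdiff F (bdVs V)).
  apply: leq_trans sizeF; apply: proper_card; apply/properP; split.
    apply/subsetP => x; rewrite !in_setD in_symdiff => /andP [xM]; rewrite xM /=.
    have [xV|_] := boolP (x \in bdVs V); last by rewrite addbF.
    by move: (subsetP sV x xV); rewrite !inE (negbTE xM) => /eqP ->; rewrite tF.
  by exists t; rewrite !in_setD ?in_symdiff tM ?tF ?tV.
by exists Eh; split; rewrite // bdEh bdFs_symdiff bdFs_bdVs symdiffx0.
Qed.

Definition p5_settled Xb E f : Prop := f \in E \/ cutset (Xb :|: E :|: [set f]).

Lemma p5_settled_subset Xb E E' f :
  E \subset E' -> p5_settled Xb E f -> p5_settled Xb E' f.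
Proof.
move=> sEE' [fE | cut]; first by left; apply: (subsetP sEE').
by right; apply: cutset_subset cut _; apply: setSU; apply: setUS.
Qed.

Lemma proc_rel_inv Xb s E B E2 B2 : proc_rel Xb s E B E2 B2 ->
  [/\ E \subset E2, stab_free (Xb :|: E) -> stab_free (Xb :|: E2)
    & forall f, f \in s -> p5_settled Xb E2 f].
Proof.
elim=> {s E B E2 B2} [E B | f s E B E2 B2 ncut _ [sE2 free2 settled2]
                           | f s E B E2 B2 cut _ [sE2 free2 settled2]].
- by split.
- split=> [|_|g]; first exact: subset_trans (subsetUl _ _) sE2.
    by apply: free2; rewrite setUA; apply: stab_free_notcut.
  rewrite in_cons => /predU1P [-> | /settled2 //].
  by apply: p5_settled_subset sE2 _; left; rewrite !inE eqxx orbT.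
- split=> // g; rewrite in_cons => /predU1P [-> | /settled2 //].
  exact: p5_settled_subset sE2 (or_intror cut).
Qed.

Lemma p5_run_inv Xb st E : p5_run Xb st E ->
  stab_free (Xb :|: st_E st) ->
  (forall f, f \in st_expl st -> f \notin Xb -> p5_settled Xb (st_E st) f) ->
  stab_free (Xb :|: E) /\ (forall f, f \notin Xb -> p5_settled Xb E f).
Proof.
elim=> {st E} [st fin free settled | st st' E _ round _ IH free settled].
  by split=> [//|f fX]; apply: (settled f _ fX); apply: (subsetP fin); rewrite inE.
case: round IH => s [_ _ [E2 [B2 [hproc ->]]]] IH.
have [sE2 free2 settled2] := proc_rel_inv hproc.
apply: IH => /= [|f]; first exact: free2.
rewrite inE => /orP [/settled f_settled fX | fs _].
  exact: p5_settled_subset sE2 (f_settled fX).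
by apply: settled2; rewrite inE in fs.
Qed.

Lemma P5_returns_inv SE Xb E : P5_returns SE Xb E -> stab_free Xb ->
  stab_free (E :|: Xb) /\ (forall f, f \notin Xb -> p5_settled Xb E f).
Proof.
move=> run freeX; rewrite setUC.
by apply: (p5_run_inv run) => /= [|f]; rewrite ?setU0 ?inE.
Qed.

Lemma artificial_boundary_stab_free k (Xbar : 'I_k -> {set Face G}) Xb :
  artificial_boundary Xbar Xb -> stab_free Xb.
Proof. by case=> R []. Qed.

Lemma cycle_stab_mod_boundary k (Xbar : 'I_k -> {set Face G}) Xb S :
  logical_X_basis Xbar -> artificial_boundary Xbar Xb -> bdFs S = set0 ->
  exists2 Q : {set Face G}, Q \subset Xb & is_Xstab (symdiff S Q).
Proof.
move=> [_ _ span] [R [stabRXbar -> _]] bdS0.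
have [I stabS] := span S (commutes_all_bdFs0 bdS0).
exists (bigsymdiff I R); first exact: bigsymdiff_sub_bigcup.
rewrite -(symdiff_cancelr _ _ (bigsymdiff I Xbar)) -bigsymdiff_symdiffr.
by apply: is_Xstab_symdiff stabS _; apply: is_Xstab_bigsymdiff.
Qed.

End Complex.

Theorem theorem2 (G : complex) (HG : valid_complex G)
  (k : nat) (Xbar : 'I_k -> {set Face G}) (Hbasis : logical_X_basis Xbar)
  (Xb : {set Face G}) (HXb : artificial_boundary Xbar Xb)
  (F0 : {set Face G}) (E : {set Face G})
  (HE : P5_returns (bdFs F0) Xb E) :
  (exists Eh : {set Face G}, Eh \subset E :|: Xb /\ bdFs Eh = bdFs F0) /\
  (forall E1 E2 : {set Face G},
     E1 \subset E :|: Xb -> E2 \subset E :|: Xb ->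
     bdFs E1 = bdFs F0 -> bdFs E2 = bdFs F0 ->
     symdiff E1 E2 \subset Xb).
Proof.
have [_ bdbdV0 two_vols _ dual_connected] := HG.
have [freeEX settled] := P5_returns_inv two_vols HE (artificial_boundary_stab_free HXb).
split.
  apply: (bdFs_sub_of_stab bdbdV0 (M := E :|: Xb)) => t tEX.
  have tX : t \notin Xb by move: tEX; rewrite inE negb_or => /andP [].
  have [tE | cut] := settled t tX; first by rewrite inE tE in tEX.
  by apply: (cutset_setU1_stab two_vols dual_connected freeEX); rewrite (setUC E).
move=> E1 E2 sE1 sE2 bdE1 bdE2.
have [|Q sQX stabQ] := cycle_stab_mod_boundary (S := symdiff E1 E2) Hbasis HXb.
  by rewrite bdFs_symdiff bdE1 bdE2 symdiffxx.
have sQEX : Q \subset E :|: Xb := subset_trans sQX (subsetUr _ _).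
by rewrite (stab_free_eq freeEX (symdiff_subset sE1 sE2) sQEX stabQ).
Qed.
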